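(* For all integers $k\ge 1$ and $j\ge 1$, setting $m=\binom{kj-1}{(k-1)j}$, the complete $k$-partite graph $K_{m*k}$ is not $(k-1)j$-choosable; that is, $\mathrm{ch}(K_{m*k})\ge (k-1)j+1$.
   Context: A list assignment $L$ for a graph $G$ assigns to each vertex $v$ a set $L(v)$ of colors. An $L$-coloring is a proper coloring $f$ of $G$ with $f(v)\in L(v)$ for all $v$. $G$ is $r$-choosable if it has an $L$-coloring for every list assignment $L$ with $|L(v)|\ge r$ for all $v$; the choice number $\mathrm{ch}(G)$ is the least such $r$. $K_{m*k}$ denotes the complete multipartite graph with $k$ parts of size $m$. *)

From mathcomp Require Import all_boot.
Set Implicit Arguments. Unset Strict Implicit. Unset Printing Implicit Defensive.

(* A list assignment assigns to each vertex a list of colours (natural numbers);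
   |L(v)| is the number of distinct colours, size (undup (L v)). *)
Definition list_assignment (V : finType) := V -> seq nat.

Definition L_coloring (V : finType) (adj : rel V) (L : list_assignment V)
  (f : V -> nat) : Prop :=
  (forall v, f v \in L v) /\ (forall u v, adj u v -> f u != f v).

Definition choosable (V : finType) (adj : rel V) (r : nat) : Prop :=
  forall L : list_assignment V, (forall v, r <= size (undup (L v))) ->
    exists f : V -> nat, L_coloring adj L f.

Definition Kmk_vertex (m k : nat) : finType := ('I_k * 'I_m)%type.
Definition Kmk_adj (m k : nat) : rel (Kmk_vertex m k) :=
  fun x y => x.1 != y.1.

From mathcomp Require Import all_boot.
From mathcomp Require Import zify.

Set Implicit Arguments. Unset Strict Implicit. Unset Printing Implicit Defensive.

(* The complete k-partite graph K_{m*k} with parts of size m = C(n, s) is not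
   s-choosable as soon as s <= n < k (n - s + 1).
   Colour the i-th vertex of every part from the i-th s-subset of the colours
   {0, ..., n-1}.  In a proper colouring, the set U p of colours used on part p
   meets every s-subset of colours (some vertex of p carries that subset as its
   list), so it misses fewer than s colours: n - s < #|U p|.  Vertices of
   different parts are adjacent, so the sets U p are pairwise disjoint and
   k (n - s + 1) <= n, a contradiction.  The theorem is the instance
   n = kj - 1, s = (k - 1) j, for which n - s + 1 = j. *)

Lemma sum_card_disjoint_le (I T : finType) (F : I -> {set T}) :
  (forall i j, i != j -> [disjoint F i & F j]) -> \sum_i #|F i| <= #|T|.
Proof.
move=> disjF; under eq_bigr do rewrite -sum1_card.
rewrite -(partition_disjoint_bigcup _ _ disjF) sum1_card.
exact: max_card.
Qed.

Lemma hitting_set_card (T : finType) (U : {set T}) (s : nat) :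
  (forall A : {set T}, #|A| = s -> exists2 x, x \in A & x \in U) ->
  #|T| < #|U| + s.
Proof.
move=> hitU; rewrite ltnNge; apply/negP => small_U.
have s_le_compl : s <= #|~: U| by have := cardsC U; lia.
have : 0 < #|[set A : {set T} | A \subset ~: U & #|A| == s]|.
  by rewrite cards_draws bin_gt0.
case/card_gt0P => A; rewrite inE => /andP[/subsetP A_sub /eqP cardA].
have [x xA xU] := hitU A cardA.
by have := A_sub x xA; rewrite inE xU.
Qed.

Section SubsetLists.

Variables n s : nat.

Definition draws := [set A : {set 'I_n} | #|A| == s].

(* The s-subsets of 'I_n are counted by 'C(n, s), so they can be indexed by
   the vertices of a part of K_{C(n,s)*k}. *)
Lemma card_draws_ord : #|draws| = 'C(n, s).
Proof. by rewrite card_draws card_ord. Qed.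

Definition draw (i : 'I_('C(n, s))) : {set 'I_n} :=
  enum_val (cast_ord (esym card_draws_ord) i).

Lemma card_draw i : #|draw i| = s.
Proof. by have := enum_valP (cast_ord (esym card_draws_ord) i); rewrite inE => /eqP. Qed.

Lemma draw_onto (A : {set 'I_n}) : #|A| = s -> exists i, draw i = A.
Proof.
move=> cardA; have A_draw : A \in draws by rewrite inE cardA.
exists (cast_ord card_draws_ord (enum_rank_in A_draw A)).
by rewrite /draw cast_ordK enum_rankK_in.
Qed.

Definition draw_lists (k : nat) : list_assignment (Kmk_vertex 'C(n, s) k) :=
  fun v => map val (enum (draw v.2)).

Lemma size_draw_lists k (v : Kmk_vertex 'C(n, s) k) :
  size (undup (draw_lists v)) = s.
Proof.
rewrite undup_id; last by rewrite map_inj_uniq ?enum_uniq //; exact: val_inj.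
by rewrite size_map -cardE card_draw.
Qed.

Definition part_colours k (f : Kmk_vertex 'C(n, s) k -> nat) (p : 'I_k) :
  {set 'I_n} := [set c : 'I_n | [exists i, f (p, i) == val c]].

Lemma part_colours_hit k (f : Kmk_vertex 'C(n, s) k -> nat) (p : 'I_k) :
  (forall v, f v \in draw_lists v) ->
  forall A : {set 'I_n}, #|A| = s -> exists2 c, c \in A & c \in part_colours f p.
Proof.
move=> f_in A /draw_onto[i def_A].
have /mapP[c cA fc] := f_in (p, i).
rewrite mem_enum /= def_A in cA.
by exists c => //; rewrite inE; apply/existsP; exists i; rewrite fc.
Qed.

Lemma part_colours_disjoint k (f : Kmk_vertex 'C(n, s) k -> nat) (p q : 'I_k) :
  (forall u v, Kmk_adj u v -> f u != f v) ->
  p != q -> [disjoint part_colours f p & part_colours f q].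
Proof.
move=> proper_f pq; apply/pred0P => c /=.
apply/negP; rewrite !inE => /andP[/existsP[i /eqP fi] /existsP[i' /eqP fi']].
by have := proper_f (p, i) (q, i') pq; rewrite fi fi' eqxx.
Qed.

(* The general bound: K_{C(n,s)*k} is not s-choosable when s <= n < k (n - s + 1).
   (For s > n there are no s-subsets, the graph has no vertices and is choosable.) *)
Theorem Kmk_draws_not_choosable k :
  s <= n -> n < k * (n - s).+1 -> ~ choosable (@Kmk_adj 'C(n, s) k) s.
Proof.
move=> s_le_n n_small choosable_K.
have [f [f_in proper_f]] := choosable_K (@draw_lists k)
  (fun v => eq_leq (esym (size_draw_lists v))).
have big_part p : (n - s).+1 <= #|part_colours f p|.
  by have := hitting_set_card (part_colours_hit p f_in); rewrite card_ord; lia.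
have sum_le : \sum_(p < k) #|part_colours f p| <= n.
  by rewrite -[n in _ <= n]card_ord; apply: sum_card_disjoint_le => p q;
     exact: part_colours_disjoint.
have sum_ge : \sum_(p < k) (n - s).+1 <= \sum_(p < k) #|part_colours f p|.
  by apply: leq_sum => p _; apply: big_part.
by move: sum_ge; rewrite sum_nat_const card_ord; lia.
Qed.

End SubsetLists.

Theorem mainTheorem3 (k j : nat) (hk : 1 <= k) (hj : 1 <= j) :
  let m := 'C(k * j - 1, (k - 1) * j) in
  ~ choosable (@Kmk_adj m k) ((k - 1) * j).
Proof.
have split_kj : k * j = (k - 1) * j + j by rewrite -{1}(subnK hk) mulnDl mul1n.
have kj_pos : 0 < k * j by rewrite muln_gt0 hk hj.
apply: Kmk_draws_not_choosable; first lia.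
have -> : (k * j - 1 - (k - 1) * j).+1 = j by lia.
lia.
Qed.
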